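(* Let $G=(V,E)$ with weight $\mu$ be an infinite, connected, locally finite weighted graph satisfying condition $(p_0)$, and let $m>1$. Let $(p,q)\in G_6=\{(p,q): p<m-1-q,\ q<m-1\}\cup\{(m-1,0)\}$. Then the inequality $\Delta_m u+u^p|\nabla u|^q\le 0$ on $V$ admits no nontrivial positive solution (no volume growth assumption is imposed).
   Context: Setting: $G=(V,E)$ is an infinite, connected, locally finite graph with no loops and no multiple edges; $x\sim y$ means $x$ and $y$ are joined by an edge. A weight is a symmetric function $\mu:V\times V\to[0,\infty)$ with $\mu_{xy}=\mu_{yx}>0$ if and only if $x\sim y$; the vertex measure is $\mu(x)=\sum_{y\sim x}\mu_{xy}$. For $m>1$ and $u:V\to\mathbb R$, $\Delta_m u(x)=\frac{1}{\mu(x)}\sum_{y\sim x}\mu_{xy}|u(y)-u(x)|^{m-2}(u(y)-u(x))$ and $|\nabla u(x)|=\big(\sum_{y\sim x}\frac{\mu_{xy}}{2\mu(x)}(u(y)-u(x))^2\big)^{1/2}$. Condition $(p_0)$: there is a constant $p_0>1$ such that $\mu_{xy}/\mu(x)\ge 1/p_0$ for all $x\sim y$. A nontrivial positive solution of $\Delta_m u+u^p|\nabla u|^q\le 0$ is a non-constant function $u:V\to(0,\infty)$ such that $\Delta_m u(x)+u(x)^p|\nabla u(x)|^q\le 0$ for every $x\in V$, with the conventions $0^0=1$, $0^q=0$ for $q>0$, and, for $q<0$, $|\nabla u(x)|^q=+\infty$ when $|\nabla u(x)|=0$ (so the inequality fails at such $x$). *)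

From Stdlib Require Import Reals Lra List Relations.
Import ListNotations.
Open Scope R_scope.

(* A locally finite graph on a vertex type V is given by its (finite,
   duplicate-free) neighbour lists nb : V -> list V;  x ~ y  iff  In y (nb x). *)
Definition adj {V : Type} (nb : V -> list V) (x y : V) : Prop := In y (nb x).

Definition infinite_connected_lf_graph {V : Type} (nb : V -> list V) : Prop :=
  (forall x, NoDup (nb x)) /\
  (forall x y, adj nb x y -> adj nb y x) /\
  (forall x, ~ adj nb x x) /\
  (forall x y, clos_refl_trans V (adj nb) x y) /\
  (forall l : list V, exists v, ~ In v l).

Definition is_weight {V : Type} (nb : V -> list V) (mu : V -> V -> R) : Prop :=
  (forall x y, mu x y = mu y x) /\
  (forall x y, 0 <= mu x y) /\
  (forall x y, 0 < mu x y <-> adj nb x y).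

Definition sum_nb {V : Type} (nb : V -> list V) (x : V) (f : V -> R) : R :=
  fold_right Rplus 0 (map f (nb x)).

Definition muV {V : Type} (nb : V -> list V) (mu : V -> V -> R) (x : V) : R :=
  sum_nb nb x (fun y => mu x y).

Definition cond_p0 {V : Type} (nb : V -> list V) (mu : V -> V -> R) : Prop :=
  exists p0, 1 < p0 /\
    forall x y, adj nb x y -> mu x y / muV nb mu x >= 1 / p0.

(* |a|^(m-2) a, with value 0 at a = 0 *)
Definition phim (m a : R) : R :=
  if Rlt_dec 0 a then Rpower a (m - 1)
  else if Rlt_dec a 0 then - Rpower (- a) (m - 1) else 0.

Definition mLap {V : Type} (nb : V -> list V) (mu : V -> V -> R) (m : R)
  (u : V -> R) (x : V) : R :=
  / muV nb mu x * sum_nb nb x (fun y => mu x y * phim m (u y - u x)).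

Definition gradn {V : Type} (nb : V -> list V) (mu : V -> V -> R)
  (u : V -> R) (x : V) : R :=
  sqrt (sum_nb nb x (fun y => mu x y / (2 * muV nb mu x) * (u y - u x) ^ 2)).

(* the inequality Delta_m u + u^p |grad u|^q <= 0 at x, with the conventions
   0^0 = 1, 0^q = 0 (q > 0), 0^q = +oo (q < 0, inequality fails) *)
Definition ineq_at {V : Type} (nb : V -> list V) (mu : V -> V -> R)
  (m p q : R) (u : V -> R) (x : V) : Prop :=
  let g := gradn nb mu u x in
  if Req_EM_T g 0 then
    (if Rlt_dec q 0 then False
     else if Req_EM_T q 0 then mLap nb mu m u x + Rpower (u x) p <= 0
     else mLap nb mu m u x <= 0)
  else mLap nb mu m u x + Rpower (u x) p * Rpower g q <= 0.

Definition nontrivial_pos_solution {V : Type} (nb : V -> list V)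
  (mu : V -> V -> R) (m p q : R) (u : V -> R) : Prop :=
  (forall x, 0 < u x) /\ (exists x y, u x <> u y) /\
  (forall x, ineq_at nb mu m p q u x).

Definition in_G6 (m p q : R) : Prop :=
  (p < m - 1 - q /\ q < m - 1) \/ (p = m - 1 /\ q = 0).

From Stdlib Require Import Reals Lra List Relations.
Import ListNotations.
Open Scope R_scope.

(* Let u be a nonconstant positive solution.  At a vertex x with nonzero gradient,
   Delta_m u(x) < 0, so u drops to some neighbour; let A be the largest drop.  Then
   Delta_m u(x) >= - A^(m-1), and by (p_0) |grad u(x)| is comparable to A, whence
   u(x)^p A^q <~ A^(m-1).  The neighbour realising A again has nonzero gradient, so
   this can be iterated.  For (p,q) = (m-1,0) it already contradicts A < u(x).  For
   p < m-1-q the inequality forces, along the descending path started at any vertex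
   with nonzero gradient, every drop to exceed a fixed delta > 0, so u eventually
   becomes negative. *)

Lemma Rpower_pos (x c : R) : 0 < Rpower x c.
Proof. apply exp_pos. Qed.

Lemma Rle_Rpower_l_neg (a b c : R) : c <= 0 -> 0 < a <= b -> Rpower b c <= Rpower a c.
Proof.
  intros Hc Hab. replace c with (- - c) by ring.
  rewrite (Rpower_Ropp b (- c)), (Rpower_Ropp a (- c)).
  apply Rinv_le_contravar; [apply Rpower_pos | apply Rle_Rpower_l; lra].
Qed.

Lemma Rpower_Rpower_inv (x c : R) : 0 < x -> 0 < c -> Rpower (Rpower x c) (/ c) = x.
Proof. intros Hx Hc. rewrite Rpower_mult, Rinv_r by lra. now apply Rpower_1. Qed.

Lemma sum_nb_le {V : Type} (nb : V -> list V) (x : V) (f g : V -> R) :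
  (forall y, adj nb x y -> f y <= g y) -> sum_nb nb x f <= sum_nb nb x g.
Proof.
  unfold sum_nb, adj. induction (nb x) as [|a l IH]; simpl; intros H; [lra|].
  pose proof (H a (or_introl eq_refl)). pose proof (IH (fun y Hy => H y (or_intror Hy))). lra.
Qed.

Lemma sum_nb_nonneg {V : Type} (nb : V -> list V) (x : V) (f : V -> R) :
  (forall y, adj nb x y -> 0 <= f y) -> 0 <= sum_nb nb x f.
Proof.
  unfold sum_nb, adj. induction (nb x) as [|a l IH]; simpl; intros H; [lra|].
  pose proof (H a (or_introl eq_refl)). pose proof (IH (fun y Hy => H y (or_intror Hy))). lra.
Qed.

Lemma sum_nb_ge_term {V : Type} (nb : V -> list V) (x : V) (f : V -> R) (z : V) :
  (forall y, adj nb x y -> 0 <= f y) -> adj nb x z -> f z <= sum_nb nb x f.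
Proof.
  unfold sum_nb, adj. induction (nb x) as [|a l IH]; simpl; intros H Hz; [contradiction|].
  assert (Hl : 0 <= fold_right Rplus 0 (map f l)).
  { apply (sum_nb_nonneg (fun _ => l) x f). intros y Hy. exact (H y (or_intror Hy)). }
  destruct Hz as [<- | Hz]; [lra|].
  pose proof (H a (or_introl eq_refl)). pose proof (IH (fun y Hy => H y (or_intror Hy)) Hz). lra.
Qed.

Lemma sum_nb_scal {V : Type} (nb : V -> list V) (x : V) (c : R) (f : V -> R) :
  sum_nb nb x (fun y => c * f y) = c * sum_nb nb x f.
Proof. unfold sum_nb. induction (nb x) as [|a l IH]; simpl; [ring | rewrite IH; ring]. Qed.

Lemma sum_nb_plus {V : Type} (nb : V -> list V) (x : V) (f g : V -> R) :
  sum_nb nb x (fun y => f y + g y) = sum_nb nb x f + sum_nb nb x g.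
Proof. unfold sum_nb. induction (nb x) as [|a l IH]; simpl; [ring | rewrite IH; ring]. Qed.

Lemma sum_nb_ext {V : Type} (nb : V -> list V) (x : V) (f g : V -> R) :
  (forall y, f y = g y) -> sum_nb nb x f = sum_nb nb x g.
Proof.
  intros H. unfold sum_nb. induction (nb x) as [|a l IH]; simpl; [ring | now rewrite IH, H].
Qed.

Lemma exists_nb_argmax {V : Type} (nb : V -> list V) (x : V) (f : V -> R) (y0 : V) :
  adj nb x y0 -> exists y, adj nb x y /\ forall z, adj nb x z -> f z <= f y.
Proof.
  unfold adj. intros Hy0. assert (Hne : nb x <> []) by (intros E; rewrite E in Hy0; exact Hy0).
  clear Hy0. induction (nb x) as [|a l IH]; [contradiction|]. clear Hne.
  destruct l as [|b l].
  - exists a. split; [now left|]. intros z [<- | []]. lra.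
  - destruct IH as [y [Hy Hmax]]; [discriminate|].
    destruct (Rle_dec (f a) (f y)).
    + exists y. split; [now right|]. intros z [<- | Hz]; [lra | auto].
    + exists a. split; [now left|]. intros z [<- | Hz]; [lra|]. pose proof (Hmax z Hz). lra.
Qed.

Lemma phim_nonneg (m d : R) : 0 <= d -> 0 <= phim m d.
Proof.
  intros Hd. unfold phim. destruct (Rlt_dec 0 d); [left; apply Rpower_pos|].
  destruct (Rlt_dec d 0); lra.
Qed.

Lemma phim_pos (m d : R) : 0 < d -> phim m d = Rpower d (m - 1).
Proof. intros Hd. unfold phim. destruct (Rlt_dec 0 d); lra. Qed.

Lemma phim_ge (m d A : R) : 1 < m -> 0 < A -> - A <= d -> - Rpower A (m - 1) <= phim m d.
Proof.
  intros Hm HA Hd. pose proof (Rpower_pos A (m - 1)). unfold phim.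
  destruct (Rlt_dec 0 d); [pose proof (Rpower_pos d (m - 1)); lra|].
  destruct (Rlt_dec d 0); [|lra].
  assert (Rpower (- d) (m - 1) <= Rpower A (m - 1)) by (apply Rle_Rpower_l; lra). lra.
Qed.

(* At a vertex whose largest drop to a neighbour is A, the gradient is at least
   [sqrt (/ (2 * p0)) * A] and, where Delta_m u <= 0, at most
   [(p0 ^ (1 / (m - 1)) + 1) * A]; [grad_const] is the bound giving
   [(grad_const * A) ^ q <= |grad u| ^ q] for the sign of q. *)
Definition grad_const (p0 m q : R) : R :=
  if Rle_dec 0 q then sqrt (/ (2 * p0)) else Rpower p0 (/ (m - 1)) + 1.

Lemma grad_const_pos (p0 m q : R) : 1 < p0 -> 0 < grad_const p0 m q.
Proof.
  intros Hp0. unfold grad_const. destruct (Rle_dec 0 q).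
  - apply sqrt_lt_R0, Rinv_0_lt_compat. lra.
  - pose proof (Rpower_pos p0 (/ (m - 1))). lra.
Qed.

Section WeightedGraph.
Variables (V : Type) (nb : V -> list V) (mu : V -> V -> R).
Hypothesis Hw : is_weight nb mu.

Lemma muV_pos (x y : V) : adj nb x y -> 0 < muV nb mu x.
Proof.
  intros Hxy. destruct Hw as [_ [Hnn Hpos]].
  pose proof (proj2 (Hpos x y) Hxy).
  pose proof (sum_nb_ge_term nb x (fun y => mu x y) y (fun z _ => Hnn x z) Hxy).
  unfold muV. lra.
Qed.

Lemma cond_p0_lower_bound :
  cond_p0 nb mu -> exists p0, 1 < p0 /\ forall x y, adj nb x y -> muV nb mu x / p0 <= mu x y.
Proof.
  intros [p0 [Hp0 Hcond]]. exists p0. split; [assumption|].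
  intros x y Hxy. pose proof (muV_pos x y Hxy). pose proof (Hcond x y Hxy).
  apply (Rmult_le_reg_r (/ muV nb mu x)); [now apply Rinv_0_lt_compat|].
  replace (muV nb mu x / p0 * / muV nb mu x) with (1 / p0) by (field; lra). lra.
Qed.

Variables (p0 m : R) (u : V -> R).
Hypothesis Hp0 : 1 < p0.
Hypothesis Hmu : forall x y, adj nb x y -> muV nb mu x / p0 <= mu x y.
Hypothesis Hm : 1 < m.

Lemma gradn_ge_nb (x y : V) :
  adj nb x y -> sqrt (/ (2 * p0)) * Rabs (u y - u x) <= gradn nb mu u x.
Proof.
  intros Hxy. pose proof (muV_pos x y Hxy) as HM. destruct Hw as [_ [Hnn _]].
  rewrite <- sqrt_Rsqr_abs, <- sqrt_mult
    by (apply Rle_0_sqr || (left; apply Rinv_0_lt_compat; lra)).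
  apply sqrt_le_1_alt.
  apply Rle_trans with (mu x y / (2 * muV nb mu x) * (u y - u x) ^ 2).
  - rewrite <- Rsqr_pow2. apply Rmult_le_compat_r; [apply Rle_0_sqr|].
    pose proof (Hmu x y Hxy).
    replace (/ (2 * p0)) with (muV nb mu x / p0 / (2 * muV nb mu x)) by (field; lra).
    apply Rmult_le_compat_r; [left; apply Rinv_0_lt_compat|]; lra.
  - apply (sum_nb_ge_term nb x (fun y => mu x y / (2 * muV nb mu x) * (u y - u x) ^ 2));
      [|assumption].
    intros z _. apply Rmult_le_pos; [|apply pow2_ge_0].
    apply Rmult_le_pos; [apply Hnn | left; apply Rinv_0_lt_compat; lra].
Qed.

Lemma gradn_pos (x y : V) : adj nb x y -> u x <> u y -> 0 < gradn nb mu u x.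
Proof.
  intros Hxy Hne. eapply Rlt_le_trans; [|apply (gradn_ge_nb x y Hxy)].
  apply Rmult_lt_0_compat; [apply sqrt_lt_R0, Rinv_0_lt_compat; lra | apply Rabs_pos_lt; lra].
Qed.

Lemma gradn_le (x y0 : V) (D : R) :
  adj nb x y0 -> 0 <= D -> (forall y, adj nb x y -> Rabs (u y - u x) <= D) ->
  gradn nb mu u x <= D.
Proof.
  intros Hxy0 HD Hbound. pose proof (muV_pos x y0 Hxy0) as HM. destruct Hw as [_ [Hnn _]].
  unfold gradn. rewrite <- (sqrt_square D) by assumption. apply sqrt_le_1_alt.
  apply Rle_trans with (sum_nb nb x (fun y => D * D / (2 * muV nb mu x) * mu x y)).
  - apply sum_nb_le. intros y Hy.
    assert (Hd : (u y - u x) ^ 2 <= D * D).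
    { rewrite <- pow2_abs. pose proof (Rabs_pos (u y - u x)). pose proof (Hbound y Hy). nra. }
    pose proof (Hnn x y).
    replace (D * D / (2 * muV nb mu x) * mu x y) with (mu x y / (2 * muV nb mu x) * (D * D))
      by (field; lra).
    apply Rmult_le_compat_l; [|assumption].
    apply Rmult_le_pos; [assumption | left; apply Rinv_0_lt_compat; lra].
  - rewrite sum_nb_scal. change (sum_nb nb x (mu x)) with (muV nb mu x).
    replace (D * D / (2 * muV nb mu x) * muV nb mu x) with (D * D / 2) by (field; lra). nra.
Qed.

Lemma mLap_shift (x y0 : V) (A : R) :
  adj nb x y0 ->
  muV nb mu x * (mLap nb mu m u x + Rpower A (m - 1)) =
  sum_nb nb x (fun y => mu x y * (phim m (u y - u x) + Rpower A (m - 1))).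
Proof.
  intros Hxy0. pose proof (muV_pos x y0 Hxy0).
  rewrite (sum_nb_ext nb x _
    (fun y => mu x y * phim m (u y - u x) + Rpower A (m - 1) * mu x y)) by (intros; ring).
  rewrite sum_nb_plus, sum_nb_scal. unfold mLap.
  change (sum_nb nb x (mu x)) with (muV nb mu x). field. lra.
Qed.

Lemma mLap_shift_term_nonneg (x y : V) (A : R) :
  0 < A -> (forall z, adj nb x z -> u x - u z <= A) -> adj nb x y ->
  0 <= mu x y * (phim m (u y - u x) + Rpower A (m - 1)).
Proof.
  intros HA Hdrop Hxy. destruct Hw as [_ [Hnn _]]. apply Rmult_le_pos; [apply Hnn|].
  pose proof (phim_ge m (u y - u x) A Hm HA ltac:(pose proof (Hdrop y Hxy); lra)). lra.
Qed.

Lemma mLap_ge (x y0 : V) (A : R) :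
  adj nb x y0 -> 0 < A -> (forall y, adj nb x y -> u x - u y <= A) ->
  - Rpower A (m - 1) <= mLap nb mu m u x.
Proof.
  intros Hxy0 HA Hdrop. pose proof (muV_pos x y0 Hxy0).
  assert (0 <= muV nb mu x * (mLap nb mu m u x + Rpower A (m - 1))).
  { rewrite (mLap_shift x y0 A Hxy0). apply sum_nb_nonneg.
    intros y Hy. exact (mLap_shift_term_nonneg x y A HA Hdrop Hy). }
  nra.
Qed.

Lemma mLap_nonneg_local_min (x y0 : V) :
  adj nb x y0 -> (forall y, adj nb x y -> u x <= u y) -> 0 <= mLap nb mu m u x.
Proof.
  intros Hxy0 Hmin. pose proof (muV_pos x y0 Hxy0). destruct Hw as [_ [Hnn _]].
  unfold mLap. apply Rmult_le_pos; [left; now apply Rinv_0_lt_compat|].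
  apply sum_nb_nonneg. intros y Hy. apply Rmult_le_pos; [apply Hnn|].
  apply phim_nonneg. pose proof (Hmin y Hy). lra.
Qed.

(* The rise to y contributes at least [mu(x)/p0 * (u y - u x)^(m-1)] to
   [mu(x) * Delta_m u(x) <= 0], and the drops at least [- mu(x) * A^(m-1)]. *)
Lemma rise_le_drop (x y : V) (A : R) :
  mLap nb mu m u x <= 0 -> 0 < A -> (forall z, adj nb x z -> u x - u z <= A) ->
  adj nb x y -> u y - u x <= Rpower p0 (/ (m - 1)) * A.
Proof.
  intros Hsuper HA Hdrop Hxy. pose proof (Rpower_pos p0 (/ (m - 1))).
  destruct (Rle_dec (u y - u x) 0) as [|Hrise]; [nra|].
  pose proof (muV_pos x y Hxy) as HM. pose proof (Hmu x y Hxy).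
  pose proof (Rpower_pos A (m - 1)). pose proof (Rpower_pos (u y - u x) (m - 1)).
  assert (Hterm : mu x y * (Rpower (u y - u x) (m - 1) + Rpower A (m - 1))
                  <= muV nb mu x * Rpower A (m - 1)).
  { rewrite <- (phim_pos m) by lra.
    apply Rle_trans with (muV nb mu x * (mLap nb mu m u x + Rpower A (m - 1))); [|nra].
    rewrite (mLap_shift x y A Hxy).
    apply (sum_nb_ge_term nb x (fun z => mu x z * (phim m (u z - u x) + Rpower A (m - 1))));
      [|assumption].
    intros z Hz. exact (mLap_shift_term_nonneg x z A HA Hdrop Hz). }
  assert (Hpow : Rpower (u y - u x) (m - 1) <= p0 * Rpower A (m - 1)).
  { apply (Rmult_le_reg_l (muV nb mu x / p0)); [apply Rdiv_lt_0_compat; lra|].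
    replace (muV nb mu x / p0 * (p0 * Rpower A (m - 1))) with (muV nb mu x * Rpower A (m - 1))
      by (field; lra).
    assert (muV nb mu x / p0 * Rpower (u y - u x) (m - 1) <= mu x y * Rpower (u y - u x) (m - 1))
      by (apply Rmult_le_compat_r; lra).
    assert (0 <= mu x y * Rpower A (m - 1))
      by (apply Rmult_le_pos; [apply Hw | lra]).
    rewrite Rmult_plus_distr_l in Hterm. lra. }
  rewrite <- (Rpower_Rpower_inv (u y - u x) (m - 1)) by lra.
  rewrite <- (Rpower_Rpower_inv A (m - 1)) by lra.
  rewrite Rpower_mult_distr by (lra || apply Rpower_pos).
  apply Rle_Rpower_l; [left; apply Rinv_0_lt_compat; lra | lra].
Qed.

Lemma grad_const_pow_le (q : R) (x y : V) :
  mLap nb mu m u x <= 0 -> adj nb x y -> 0 < u x - u y ->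
  (forall z, adj nb x z -> u x - u z <= u x - u y) ->
  Rpower (grad_const p0 m q * (u x - u y)) q <= Rpower (gradn nb mu u x) q.
Proof.
  intros Hsuper Hxy HA Hdrop. set (A := u x - u y) in *.
  assert (Hge : sqrt (/ (2 * p0)) * A <= gradn nb mu u x).
  { pose proof (gradn_ge_nb x y Hxy) as Hge.
    rewrite Rabs_minus_sym, Rabs_pos_eq in Hge by (unfold A in HA; lra). exact Hge. }
  assert (Hc : 0 < sqrt (/ (2 * p0))) by (apply sqrt_lt_R0, Rinv_0_lt_compat; lra).
  unfold grad_const. destruct (Rle_dec 0 q) as [Hq|Hq].
  - apply Rle_Rpower_l; [assumption|]. split; [apply Rmult_lt_0_compat|]; lra.
  - apply Rle_Rpower_l_neg; [lra|]. split; [nra|].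
    pose proof (Rpower_pos p0 (/ (m - 1))).
    apply (gradn_le x y); [assumption | nra |]. intros z Hz.
    pose proof (rise_le_drop x z A Hsuper HA Hdrop Hz). pose proof (Hdrop z Hz).
    apply Rabs_le. split; nra.
Qed.

Lemma solution_descent (p q : R) (x : V) :
  ineq_at nb mu m p q u x -> gradn nb mu u x <> 0 ->
  exists y, adj nb x y /\ 0 < u x - u y /\
    Rpower (u x) p * Rpower (grad_const p0 m q * (u x - u y)) q <= Rpower (u x - u y) (m - 1).
Proof.
  intros Hineq Hg.
  destruct (nb x) as [|y0 l] eqn:Hnb.
  { exfalso. apply Hg. unfold gradn, sum_nb. rewrite Hnb. apply sqrt_0. }
  assert (Hxy0 : adj nb x y0) by (unfold adj; rewrite Hnb; now left).
  unfold ineq_at in Hineq. destruct (Req_EM_T (gradn nb mu u x) 0) as [|_]; [contradiction|].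
  pose proof (Rpower_pos (u x) p). pose proof (Rpower_pos (gradn nb mu u x) q).
  assert (Hsuper : mLap nb mu m u x < 0) by nra.
  destruct (exists_nb_argmax nb x (fun y => u x - u y) y0 Hxy0) as [y [Hxy Hdrop]].
  cbv beta in Hdrop.
  assert (HA : 0 < u x - u y).
  { destruct (Rlt_dec 0 (u x - u y)) as [|HA]; [assumption|]. exfalso.
    assert (0 <= mLap nb mu m u x); [|lra].
    apply (mLap_nonneg_local_min x y0 Hxy0). intros z Hz. pose proof (Hdrop z Hz). lra. }
  pose proof (mLap_ge x y0 (u x - u y) Hxy0 HA Hdrop).
  pose proof (grad_const_pow_le q x y ltac:(lra) Hxy HA Hdrop).
  exists y. split; [assumption|]. split; [assumption|].
  apply Rle_trans with (Rpower (u x) p * Rpower (gradn nb mu u x) q); [|lra].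
  apply Rmult_le_compat_l; lra.
Qed.

End WeightedGraph.

Lemma nonconstant_edge {V : Type} (nb : V -> list V) (u : V -> R) (a b : V) :
  clos_refl_trans V (adj nb) a b -> u a <> u b -> exists x y, adj nb x y /\ u x <> u y.
Proof.
  induction 1 as [x y Hxy | x | x y z _ IHxy _ IHyz]; intros Hne; eauto; [contradiction|].
  destruct (Req_EM_T (u x) (u y)) as [E|]; [apply IHyz; congruence | now apply IHxy].
Qed.

(* [kap w^p <= d^k < w^k] forces [w > kap^(1/(k-p))], which bounds [w^p] from below
   on the range [w <= U0]. *)
Lemma uniform_descent_step (kap p k U0 : R) :
  0 < kap -> 0 < k -> p < k -> 0 < U0 ->
  exists del, 0 < del /\
    forall w d, 0 < d < w -> w <= U0 -> kap * Rpower w p <= Rpower d k -> del <= d.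
Proof.
  intros Hkap Hk Hpk HU0.
  set (L := Rpower kap (/ (k - p))).
  set (mn := Rmin (Rpower L p) (Rpower U0 p)).
  assert (Hmn : 0 < mn) by (unfold mn, Rmin; destruct Rle_dec; apply Rpower_pos).
  exists (Rpower (kap * mn) (/ k)). split; [apply Rpower_pos|].
  intros w d Hd Hw Hi.
  assert (HL : L < w).
  { assert (Hdw : Rpower d k < Rpower w (k - p) * Rpower w p).
    { rewrite <- Rpower_plus. replace (k - p + p) with k by ring.
      apply Rlt_Rpower_l; lra. }
    pose proof (Rpower_pos w p).
    assert (kap < Rpower w (k - p)) by nra.
    rewrite <- (Rpower_Rpower_inv w (k - p)) by lra.
    apply Rlt_Rpower_l; [apply Rinv_0_lt_compat; lra | split; lra]. }
  assert (Hwp : mn <= Rpower w p).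
  { assert (0 < L) by apply Rpower_pos.
    destruct (Rle_dec 0 p).
    - apply Rle_trans with (Rpower L p); [apply Rmin_l | apply Rle_Rpower_l; lra].
    - apply Rle_trans with (Rpower U0 p); [apply Rmin_r | apply Rle_Rpower_l_neg; lra]. }
  rewrite <- (Rpower_Rpower_inv d k) by lra.
  apply Rle_Rpower_l; [left; apply Rinv_0_lt_compat; lra|].
  split; [apply Rmult_lt_0_compat; lra|].
  apply Rle_trans with (kap * Rpower w p); [apply Rmult_le_compat_l|]; lra.
Qed.

Lemma no_uniform_descent {V : Type} (u : V -> R) (P : V -> Prop) (x0 : V) (del : R) :
  0 < del -> (forall x, 0 < u x) -> P x0 ->
  ~ (forall x, P x -> u x <= u x0 -> exists y, P y /\ u y <= u x - del).
Proof.
  intros Hdel Hu Hx0 Hstep.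
  assert (Hchain : forall n, exists x, P x /\ u x <= u x0 - INR n * del).
  { induction n as [|n [x [Hx Hux]]].
    - exists x0. simpl. split; [assumption | lra].
    - pose proof (pos_INR n).
      destruct (Hstep x Hx) as [y [Hy Huy]]; [nra|].
      exists y. rewrite S_INR. split; [assumption | lra]. }
  destruct (INR_archimed del (u x0) Hdel) as [n Hn].
  destruct (Hchain n) as [x [_ Hx]]. pose proof (Hu x). lra.
Qed.

Lemma G6_descent_impossible {V : Type} (u : V -> R) (P : V -> Prop) (m p q C : R) :
  1 < m -> in_G6 m p q -> 0 < C -> (forall x, 0 < u x) ->
  (forall x, P x -> exists y, P y /\ 0 < u x - u y /\
     Rpower (u x) p * Rpower (C * (u x - u y)) q <= Rpower (u x - u y) (m - 1)) ->
  forall x0, ~ P x0.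
Proof.
  intros Hm HG HC Hu Hdesc x0 Hx0.
  destruct HG as [[Hpq Hq] | [-> ->]].
  - set (k := m - 1 - q).
    assert (Hkey : forall x y, 0 < u x - u y ->
      Rpower (u x) p * Rpower (C * (u x - u y)) q <= Rpower (u x - u y) (m - 1) ->
      Rpower C q * Rpower (u x) p <= Rpower (u x - u y) k).
    { intros x y Hd Hi. set (d := u x - u y) in *.
      rewrite <- Rpower_mult_distr in Hi by lra.
      replace (m - 1) with (k + q) in Hi by (unfold k; ring). rewrite Rpower_plus in Hi.
      pose proof (Rpower_pos d q). pose proof (Rpower_pos (u x) p). pose proof (Rpower_pos C q).
      apply (Rmult_le_reg_r (Rpower d q)); nra. }
    destruct (uniform_descent_step (Rpower C q) p k (u x0)) as [del [Hdel Hbound]];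
      [apply Rpower_pos | unfold k; lra | unfold k; lra | apply Hu |].
    apply (no_uniform_descent u P x0 del Hdel Hu Hx0).
    intros x Hx Hxx0. destruct (Hdesc x Hx) as [y [Hy [Hd Hi]]].
    exists y. split; [assumption|].
    pose proof (Hu y). pose proof (Hbound (u x) (u x - u y) ltac:(lra) Hxx0 (Hkey x y Hd Hi)).
    lra.
  - destruct (Hdesc x0 Hx0) as [y [_ [Hd Hi]]].
    rewrite Rpower_O in Hi by nra.
    assert (Rpower (u x0 - u y) (m - 1) < Rpower (u x0) (m - 1))
      by (pose proof (Hu y); apply Rlt_Rpower_l; lra).
    lra.
Qed.

Theorem mainTheorem7 (V : Type) (nb : V -> list V) (mu : V -> V -> R)
  (m p q : R) :
  infinite_connected_lf_graph nb -> is_weight nb mu -> cond_p0 nb mu ->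
  1 < m -> in_G6 m p q ->
  ~ exists u : V -> R, nontrivial_pos_solution nb mu m p q u.
Proof.
  intros (_ & Hsym & _ & Hconn & _) Hw Hcond Hm HG (u & Hu & (a & b & Hab) & Hsol).
  destruct (cond_p0_lower_bound V nb mu Hw Hcond) as (p0 & Hp0 & Hmu).
  assert (Hgrad : forall x y, adj nb x y -> u x <> u y -> gradn nb mu u x <> 0)
    by (intros x y Hxy Hne; apply Rgt_not_eq, (gradn_pos V nb mu Hw p0 u Hp0 Hmu x y Hxy Hne)).
  destruct (nonconstant_edge nb u a b (Hconn a b) Hab) as (x0 & y0 & Hxy0 & Hne).
  apply (G6_descent_impossible u (fun x => gradn nb mu u x <> 0) m p q (grad_const p0 m q)
           Hm HG (grad_const_pos p0 m q Hp0) Hu) with x0; [|exact (Hgrad x0 y0 Hxy0 Hne)].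
  intros x Hx.
  destruct (solution_descent V nb mu Hw p0 m u Hp0 Hmu Hm p q x (Hsol x) Hx) as (y & Hxy & Hd & Hi).
  exists y. split; [apply (Hgrad y x (Hsym x y Hxy)); lra | split; assumption].
Qed.
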